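(* Let $\mathfrak{g}$ be a real Lie algebra endowed with a complex structure $J$ such that $J\xi\cap[\mathfrak{g},\mathfrak{g}]\neq\{0\}$, where $\xi$ denotes the center of $\mathfrak{g}$. Then $(\mathfrak{g},J)$ does not admit any Hermitian-symplectic structure.
   Context: A complex structure on a real Lie algebra $\mathfrak{g}$ is a linear map $J:\mathfrak{g}\to\mathfrak{g}$ with $J^2=-\mathrm{Id}$ and $[X,Y]-[JX,JY]+J[JX,Y]+J[X,JY]=0$ for all $X,Y$. A Hermitian-symplectic structure on $(\mathfrak{g},J)$ is a real $2$-form $\Omega\in\Lambda^2\mathfrak{g}^*$ that is closed with respect to the Chevalley–Eilenberg differential (i.e. $\Omega([X,Y],Z)+\Omega([Y,Z],X)+\Omega([Z,X],Y)=0$ for all $X,Y,Z$) and satisfies $\Omega(X,JX)>0$ for all non-zero $X\in\mathfrak{g}$. *)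

From HB Require Import structures.
From mathcomp Require Import all_boot all_order all_algebra.
From mathcomp Require Import reals.
Set Implicit Arguments. Unset Strict Implicit. Unset Printing Implicit Defensive.
Import Order.TTheory GRing.Theory Num.Theory.
Local Open Scope ring_scope.

Section LieDefs.
Variables (R : realType) (V : vectType R).

Definition lie_bracket (br : V -> V -> V) : Prop :=
  [/\ (forall (a : R) x y z, br (a *: x + y) z = a *: br x z + br y z),
      (forall (a : R) x y z, br x (a *: y + z) = a *: br x y + br x z),
      (forall x, br x x = 0) &
      (forall x y z, br x (br y z) + br y (br z x) + br z (br x y) = 0)].

Definition lie_center (br : V -> V -> V) : V -> Prop :=
  fun x => forall y, br x y = 0.

Definition derived_algebra (br : V -> V -> V) : V -> Prop :=
  fun z => exists (n : nat) (c : 'I_n -> R) (a b : 'I_n -> V),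
    z = \sum_(i < n) c i *: br (a i) (b i).

(* complex structure: linear J with J^2 = -Id and vanishing Nijenhuis tensor *)
Definition complex_structure (br : V -> V -> V) (J : V -> V) : Prop :=
  [/\ (forall (a : R) x y, J (a *: x + y) = a *: J x + J y),
      (forall x, J (J x) = - x) &
      (forall x y, br x y - br (J x) (J y) + J (br (J x) y) + J (br x (J y)) = 0)].

(* Hermitian-symplectic structure: a real 2-form (bilinear, alternating),
   closed for the Chevalley-Eilenberg differential, with Omega(X,JX) > 0
   for all X <> 0. *)
Definition hermitian_symplectic (br : V -> V -> V) (J : V -> V)
    (Om : V -> V -> R) : Prop :=
  [/\ (forall (a : R) x y z, Om (a *: x + y) z = a * Om x z + Om y z),
      (forall (a : R) x y z, Om x (a *: y + z) = a * Om x y + Om x z),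
      (forall x, Om x x = 0),
      (forall x y z, Om (br x y) z + Om (br y z) x + Om (br z x) y = 0) &
      (forall x, x != 0 -> 0 < Om x (J x))].

End LieDefs.

From HB Require Import structures.
From mathcomp Require Import all_boot all_order all_algebra.
From mathcomp Require Import reals.
Set Implicit Arguments. Unset Strict Implicit. Unset Printing Implicit Defensive.
Import Order.TTheory GRing.Theory Num.Theory.
Local Open Scope ring_scope.

(* Closedness of Omega at (u, v, x) with x central kills the two terms in which
   x is bracketed, so Omega vanishes on [g,g] x xi.  If Jx lies in [g,g] for a
   central x != 0, then Omega(x, Jx) = - Omega(Jx, x) = 0, contradicting
   positivity. *)

Section AlternatingForm.
Variables (R : pzRingType) (V : lmodType R) (Om : V -> V -> R).
Hypothesis Om_linl : forall (a : R) x y z, Om (a *: x + y) z = a * Om x z + Om y z.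
Hypothesis Om_linr : forall (a : R) x y z, Om x (a *: y + z) = a * Om x y + Om x z.
Hypothesis Om_alt : forall x, Om x x = 0.

Lemma form_addl u v w : Om (u + v) w = Om u w + Om v w.
Proof. by rewrite -[u in LHS]scale1r Om_linl mul1r. Qed.

Lemma form_addr u v w : Om w (u + v) = Om w u + Om w v.
Proof. by rewrite -[u in LHS]scale1r Om_linr mul1r. Qed.

Lemma form0l w : Om 0 w = 0.
Proof. by apply/(addrI (Om 0 w)); rewrite -form_addl !addr0. Qed.

Lemma formZl a u w : Om (a *: u) w = a * Om u w.
Proof. by rewrite -[a *: u]addr0 Om_linl form0l addr0. Qed.

Lemma form_skew u v : Om u v = - Om v u.
Proof.
apply/eqP; rewrite -addr_eq0.
by have := Om_alt (u + v); rewrite form_addl !form_addr !Om_alt add0r addr0 => ->.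
Qed.

End AlternatingForm.

Section LieAlgebra.
Variables (R : realType) (V : vectType R) (br : V -> V -> V).
Hypothesis brL : lie_bracket br.

Lemma lie_bracket_skew u v : br u v = - br v u.
Proof.
have [brl brr bralt _] := brL.
have addl w1 w2 w : br (w1 + w2) w = br w1 w + br w2 w.
  by rewrite -[w1 in LHS]scale1r brl scale1r.
have addr w1 w2 w : br w (w1 + w2) = br w w1 + br w w2.
  by rewrite -[w1 in LHS]scale1r brr scale1r.
apply/eqP; rewrite -addr_eq0.
by have := bralt (u + v); rewrite addl !addr !bralt add0r addr0 => ->.
Qed.

Lemma lie_center_bracketr x u : lie_center br x -> br u x = 0.
Proof. by move=> xc; rewrite lie_bracket_skew xc oppr0. Qed.

Variables (J : V -> V) (Om : V -> V -> R).
Hypothesis OmHS : hermitian_symplectic br J Om.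

Lemma closed_form_bracket_center u v x : lie_center br x -> Om (br u v) x = 0.
Proof.
have [Ol _ _ Ocl _] := OmHS; move=> xc.
by have := Ocl u v x; rewrite (lie_center_bracketr v xc) xc !(form0l Ol) !addr0.
Qed.

Lemma closed_form_derived_center z x :
  derived_algebra br z -> lie_center br x -> Om z x = 0.
Proof.
have [Ol _ _ _ _] := OmHS; move=> [n [c [a [b ->]]]] xc.
apply: (big_ind (fun w => Om w x = 0)) => [|w1 w2 O1 O2|i _].
- exact: form0l.
- by rewrite (form_addl Ol) O1 O2 addr0.
- by rewrite (formZl Ol) closed_form_bracket_center // mulr0.
Qed.

Lemma hermitian_symplectic_J_neq0 x : x != 0 -> Om (J x) x != 0.
Proof.
have [Ol Or Oalt _ Opos] := OmHS; move=> /Opos.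
by rewrite (form_skew Ol Or Oalt) oppr_gt0 => /ltr0_neq0.
Qed.

End LieAlgebra.

Lemma complex_structure0 (R : realType) (V : vectType R) (br : V -> V -> V)
    (J : V -> V) : complex_structure br J -> J 0 = 0.
Proof.
move=> [Jlin _ _]; apply: (addrI (J 0)).
by have := Jlin 1 0 0; rewrite !scale1r !addr0 => <-.
Qed.

Theorem lemma3p2 (R : realType) (V : vectType R) (br : V -> V -> V) (J : V -> V) :
  lie_bracket br ->
  complex_structure br J ->
  (exists z : V, [/\ z != 0,
                     (exists x, lie_center br x /\ z = J x) &
                     derived_algebra br z]) ->
  ~ (exists Om : V -> V -> R, hermitian_symplectic br J Om).
Proof.
move=> brL Jcs [z [z_neq0 [x [xc zE]] z_derived]] [Om OmHS]; subst z.
have x_neq0 : x != 0.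
  by move: z_neq0; apply: contra_neq => ->; exact: complex_structure0 Jcs.
have /eqP := closed_form_derived_center brL OmHS z_derived xc.
exact/negP/(hermitian_symplectic_J_neq0 OmHS).
Qed.
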